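(* Let $m,n\in\mathbb{N}$, $s_1,\dots,s_n\in\mathbb{C}$ (nonzero in the discrete case), $\boldsymbol{u}_j,\boldsymbol{v}_j\in\mathbb{C}^m$, and define $k_{jl}=\boldsymbol{v}_j^\intercal\boldsymbol{u}_l/(s_j+s_l^* )$ in the continuous case (assuming $s_j+s_l^*\neq0$) and $k_{jl}=\boldsymbol{v}_j^\intercal\boldsymbol{u}_l/(1-s_js_l^* )$ in the discrete case (assuming $s_js_l^*\neq1$); set $\eta=0$ (continuous) or $\eta=1$ (discrete). Fix $i\in\{1,\dots,n\}$ with $k_{ii}\neq0$ and suppose $K_1=(k_{jl})_{j,l=1}^{i-1}$ is invertible. Define $$\boldsymbol{u}_i^{(-)}=\boldsymbol{u}_i-\sum_{j,k=1}^{i-1}\boldsymbol{u}_j(K_1^{-1})_{jk}k_{ki},\qquad \boldsymbol{v}_i^{(-)}=s_i^{\eta}\Big(s_i^{-\eta}\boldsymbol{v}_i-\sum_{j,k=1}^{i-1}k_{ij}(K_1^{-1})_{jk}s_k^{-\eta}\boldsymbol{v}_k\Big),$$ $$\gamma_i^{(-)}=\frac{1}{k_{ii}}\Big(k_{ii}-\sum_{j,k=1}^{i-1}k_{ij}(K_1^{-1})_{jk}k_{ki}\Big).$$ Then $\boldsymbol{v}_i^{(-)\intercal}\boldsymbol{u}_i^{(-)}=\gamma_i^{(-)}\,\boldsymbol{v}_i^\intercal\boldsymbol{u}_i$.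
   Context: ${}^*$ denotes complex conjugation and ${}^\intercal$ transposition. For $i=1$ the sums are empty. *)

From mathcomp Require Import all_boot all_order all_algebra.
Set Implicit Arguments. Unset Strict Implicit. Unset Printing Implicit Defensive.
Import Order.TTheory GRing.Theory Num.Theory.
Local Open Scope ring_scope.

Section Defs.
Variable C : numClosedFieldType.

Definition tdot (m : nat) (v u : 'cV[C]_m) : C := (v^T *m u) 0 0.

(* disc = false : continuous case (eta = 0); disc = true : discrete case (eta = 1) *)
Definition kden (disc : bool) (sj sl : C) : C :=
  if disc then 1 - sj * sl^* else sj + sl^*.

Definition spow (disc : bool) (x : C) : C := if disc then x else 1.
Definition spowinv (disc : bool) (x : C) : C := if disc then x^-1 else 1.

Definition kent (disc : bool) (m n : nat) (s : 'I_n -> C)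
  (u v : 'I_n -> 'cV[C]_m) (j l : 'I_n) : C :=
  tdot (v j) (u l) / kden disc (s j) (s l).

(* embedding of the first i indices (0-based: 0..i-1, i.e. 1..i-1 in the paper's 1-based numbering) *)
Definition wid (n : nat) (i : 'I_n) : 'I_i -> 'I_n :=
  widen_ord (ltnW (ltn_ord i)).
Arguments wid {n} i _.

Definition K1 (disc : bool) (m n : nat) (s : 'I_n -> C)
  (u v : 'I_n -> 'cV[C]_m) (i : 'I_n) : 'M[C]_i :=
  \matrix_(j < i, l < i) kent disc s u v (wid i j) (wid i l).

Definition u_minus (disc : bool) (m n : nat) (s : 'I_n -> C)
  (u v : 'I_n -> 'cV[C]_m) (i : 'I_n) : 'cV[C]_m :=
  let k := kent disc s u v in
  let Ki := invmx (K1 disc s u v i) in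
  u i - \sum_(j < i) \sum_(k0 < i) (Ki j k0 * k (wid i k0) i) *: u (wid i j).

Definition v_minus (disc : bool) (m n : nat) (s : 'I_n -> C)
  (u v : 'I_n -> 'cV[C]_m) (i : 'I_n) : 'cV[C]_m :=
  let k := kent disc s u v in
  let Ki := invmx (K1 disc s u v i) in
  spow disc (s i) *:
    (spowinv disc (s i) *: v i
     - \sum_(j < i) \sum_(k0 < i)
         (k i (wid i j) * Ki j k0 * spowinv disc (s (wid i k0))) *: v (wid i k0)).

Definition gamma_minus (disc : bool) (m n : nat) (s : 'I_n -> C)
  (u v : 'I_n -> 'cV[C]_m) (i : 'I_n) : C :=
  let k := kent disc s u v in
  let Ki := invmx (K1 disc s u v i) in
  (k i i)^-1 * (k i i - \sum_(j < i) \sum_(k0 < i) k i (wid i j) * Ki j k0 * k (wid i k0) i).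

End Defs.

(** The paper's identity is a Schur-complement computation.  After scaling
    [v_j] by [s_j^-eta], the pairing of the scaled [v_j] with [u_l] is
    [k_jl * (x_j + y_l)]: the normalised denominator splits into a part
    depending only on [j] and one depending only on [l].  Hence the matrix of
    pairings of the first [i-1] vectors is [X K_1 + K_1 Y] with [X], [Y]
    diagonal, and the corrections by [K_1^-1] in [u_i^(-)] and [v_i^(-)]
    annihilate everything except the Schur complement
    [k_ii - k_i. K_1^-1 k_.i], which factors out of the pairing. *)

From HB Require Import structures.
From mathcomp Require Import all_boot all_order all_algebra ring.
Set Implicit Arguments. Unset Strict Implicit. Unset Printing Implicit Defensive.
Import Order.TTheory GRing.Theory Num.Theory.
Local Open Scope ring_scope.

(* [beta *m K = r] and [K *m alpha = c] make the [X] and [Y] cross terms cancel. *)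
Lemma schur_complement_weighted (F : fieldType) (n : nat) (K X Y : 'M[F]_n)
    (r : 'rV_n) (c : 'cV_n) (kii xi yi : F) :
  K \in unitmx ->
  let alpha := invmx K *m c in let beta := r *m invmx K in
  kii * (xi + yi) - ((xi *: r + r *m Y) *m alpha) 0 0
    - (beta *m (X *m c + yi *: c)) 0 0 + (beta *m (X *m K + K *m Y) *m alpha) 0 0
  = (kii - (beta *m c) 0 0) * (xi + yi).
Proof.
move=> unitK alpha beta; rewrite {}/alpha {}/beta.
rewrite mulmxDl !mulmxDr mulmxDl !mulmxA mulmxK // mulmxKV //.
rewrite -!scalemxAl -scalemxAr.
set q := r *m invmx K *m c; set rYc := r *m Y *m invmx K *m c.
set rXc := r *m invmx K *m X *m c.
by rewrite !mxE; ring.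
Qed.

Section Pairing.
Variables (C : numClosedFieldType) (m : nat).

Definition cols (p : nat) (f : 'I_p -> 'cV[C]_m) : 'M[C]_(m, p) :=
  \matrix_(a, j) f j a 0.

Lemma tdotZl (a : C) (x y : 'cV[C]_m) : tdot (a *: x) y = a * tdot x y.
Proof. by rewrite /tdot linearZ -scalemxAl mxE. Qed.

Lemma tdot_expand (p : nat) (x y : 'cV[C]_m) (V W : 'M[C]_(m, p))
    (beta : 'rV_p) (alpha : 'cV_p) :
  tdot (x - V *m beta^T) (y - W *m alpha)
  = tdot x y - (x^T *m W *m alpha) 0 0 - (beta *m (V^T *m y)) 0 0
    + (beta *m (V^T *m W) *m alpha) 0 0.
Proof.
rewrite /tdot [(x - _)^T]linearB /= trmx_mul trmxK !mulmxBr !mulmxBl !mulmxA.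
by rewrite !mxE; ring.
Qed.

Lemma cols_mulmx (p : nat) (f : 'I_p -> 'cV[C]_m) (b : 'cV_p) :
  cols f *m b = \sum_j b j 0 *: f j.
Proof.
apply/matrixP => a z; rewrite ord1 !mxE summxE.
by apply: eq_bigr => j _; rewrite !mxE mulrC.
Qed.

Lemma trmx_cols_mulmx (p : nat) (f : 'I_p -> 'cV[C]_m) (y : 'cV_m) j :
  ((cols f)^T *m y) j 0 = tdot (f j) y.
Proof. by rewrite /tdot !mxE; apply: eq_bigr => a _; rewrite !mxE. Qed.

Lemma trmx_mulmx_cols (p : nat) (x : 'cV_m) (g : 'I_p -> 'cV[C]_m) l :
  (x^T *m cols g) 0 l = tdot x (g l).
Proof. by rewrite /tdot !mxE; apply: eq_bigr => a _; rewrite !mxE. Qed.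

Lemma trmx_cols_mulmx_cols (p q : nat) (f : 'I_p -> 'cV[C]_m)
    (g : 'I_q -> 'cV[C]_m) j l :
  ((cols f)^T *m cols g) j l = tdot (f j) (g l).
Proof. by rewrite /tdot !mxE; apply: eq_bigr => a _; rewrite !mxE. Qed.

End Pairing.

Section KernelDenominator.
Variables (C : numClosedFieldType) (disc : bool).

Definition kden_rowpart (x : C) : C := if disc then x^-1 else x.
Definition kden_colpart (y : C) : C := if disc then - y^* else y^*.

Lemma spowinv_kden (x y : C) : (disc -> x != 0) ->
  spowinv disc x * kden disc x y = kden_rowpart x + kden_colpart y.
Proof.
rewrite /spowinv /kden /kden_rowpart /kden_colpart.
by case: disc => [/(_ isT) x0 | _]; rewrite ?mul1r // mulrBr mulr1 mulKf.
Qed.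

Lemma spow_spowinv (x : C) : (disc -> x != 0) ->
  spow disc x * spowinv disc x = 1.
Proof. by rewrite /spow /spowinv; case: disc => [/(_ isT) /mulfV | _]; rewrite ?mulr1. Qed.

End KernelDenominator.

Section Deflation.
Variables (C : numClosedFieldType) (disc : bool) (m n : nat).
Variables (s : 'I_n -> C) (u v : 'I_n -> 'cV[C]_m) (i : 'I_n).
Hypothesis hs : disc -> forall j, s j != 0.
Hypothesis hden : forall j l, kden disc (s j) (s l) != 0.

Local Notation wi j := (@wid _ i j).
Local Notation k := (kent disc s u v).
Local Notation K := (K1 disc s u v i).
Local Notation vn j := (spowinv disc (s j) *: v j).
Local Notation x j := (kden_rowpart disc (s j)).
Local Notation y j := (kden_colpart disc (s j)).
Local Notation r := (\row_(j < i) k i (wi j)).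
Local Notation c := (\col_(j < i) k (wi j) i).
Local Notation U := (cols (fun j : 'I_i => u (wi j))).
Local Notation Vn := (cols (fun j : 'I_i => vn (wi j))).
Local Notation X := (diag_mx (\row_(j < i) x (wi j))).
Local Notation Y := (diag_mx (\row_(j < i) y (wi j))).

Lemma tdot_spowinv_kent j l : tdot (vn j) (u l) = k j l * (x j + y l).
Proof.
rewrite tdotZl -spowinv_kden; last by move=> /hs.
by rewrite /kent mulrCA divfK.
Qed.

Lemma u_minusE : u_minus disc s u v i = u i - U *m (invmx K *m c).
Proof.
rewrite /u_minus cols_mulmx; congr (_ - _); apply: eq_bigr => j _.
by rewrite -scaler_suml !mxE; congr (_ *: _); apply: eq_bigr => l _; rewrite mxE.
Qed.

Lemma v_minusE :
  v_minus disc s u v i = spow disc (s i) *: (vn i - Vn *m (r *m invmx K)^T).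
Proof.
rewrite /v_minus cols_mulmx exchange_big /=; congr (_ *: (_ - _)).
apply: eq_bigr => l _; rewrite !mxE scalerA mulr_suml scaler_suml.
by apply: eq_bigr => j _; rewrite mxE.
Qed.

Lemma gamma_minusE :
  gamma_minus disc s u v i = (k i i)^-1 * (k i i - (r *m invmx K *m c) 0 0).
Proof.
rewrite /gamma_minus -mulmxA mxE; congr (_ * (_ - _)); apply: eq_bigr => j _.
by rewrite !mxE mulr_sumr; apply: eq_bigr => l _; rewrite !mxE mulrA.
Qed.

Lemma pairing_row : (vn i)^T *m U = x i *: r + r *m Y.
Proof.
apply/matrixP => a l; rewrite ord1 trmx_mulmx_cols tdot_spowinv_kent.
by rewrite mul_mx_diag !mxE mulrDr mulrC.
Qed.

Lemma pairing_col : Vn^T *m u i = X *m c + y i *: c.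
Proof.
apply/matrixP => j a; rewrite ord1 trmx_cols_mulmx tdot_spowinv_kent.
by rewrite mul_diag_mx !mxE mulrC mulrDl.
Qed.

Lemma pairing_mx : Vn^T *m U = X *m K + K *m Y.
Proof.
apply/matrixP => j l; rewrite trmx_cols_mulmx_cols tdot_spowinv_kent.
by rewrite mul_diag_mx mul_mx_diag !mxE mulrDr mulrC.
Qed.

Lemma tdot_v_minus_u_minus : K \in unitmx ->
  tdot (v_minus disc s u v i) (u_minus disc s u v i)
  = spow disc (s i) * ((k i i - (r *m invmx K *m c) 0 0) * (x i + y i)).
Proof.
move=> unitK; rewrite u_minusE v_minusE tdotZl tdot_expand.
rewrite pairing_row pairing_col pairing_mx tdot_spowinv_kent.
by rewrite schur_complement_weighted.
Qed.

Lemma tdot_kent_diag : tdot (v i) (u i) = spow disc (s i) * (k i i * (x i + y i)).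
Proof.
by rewrite -tdot_spowinv_kent tdotZl mulrA spow_spowinv ?mul1r // => /hs.
Qed.

End Deflation.

Theorem proposition6p9 (C : numClosedFieldType) (disc : bool) (m n : nat)
  (s : 'I_n -> C) (u v : 'I_n -> 'cV[C]_m)
  (hs : disc -> forall j, s j != 0)
  (hden : forall j l, kden disc (s j) (s l) != 0)
  (i : 'I_n)
  (hkii : kent disc s u v i i != 0)
  (hK1 : K1 disc s u v i \in unitmx) :
  tdot (v_minus disc s u v i) (u_minus disc s u v i)
  = gamma_minus disc s u v i * tdot (v i) (u i).
Proof.
rewrite tdot_v_minus_u_minus // gamma_minusE (tdot_kent_diag u v i hs hden).
by field.
Qed.
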